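(* Let $K$ be a context, $N$ an embedded net, $\sigma_0$ a marking of state conditions, and suppose $K[N]$ is a non-interfering substitution from $\sigma_0$. Then every complete sequence $\pi$ of $K[N]$ from $(I(K[N]),\sigma_0)$ (i.e. a sequence of events from $(I(K[N]),\sigma_0)$ to $(T(K[N]),\sigma')$ for some $\sigma'$) is of the form $\Pi_0\cdot(\Pi_1\cdot\Pi_0)^*$, where: (a) $\Pi_0$ ranges over sequences consisting of $K$-events all of whose markings (including the first and last) are $K$-markings; (b) $\Pi_1$ ranges over nonempty sequences of events (of either kind) all of whose markings are $N$-markings, in which no $K$-event has a pre- or postcondition in $P_i\cup P_t$, such that if $(C_N\cup C_K,\sigma)$ and $(C_N'\cup C_K',\sigma')$ are the initial and final markings of the sequence then $C_N=P_i$ and $C_N'=P_t$, and whose first and last events are both $N$-events.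
   Context: Petri nets: an event $e$ has preconditions ${}^\bullet e$ and postconditions $e^\bullet$; events are identified with their pair $({}^\bullet e,e^\bullet)$. $e$ has concession in marking $M$ if ${}^\bullet e\subseteq M$ and $(M\setminus{}^\bullet e)\cap e^\bullet=\emptyset$; then $M\xrightarrow{e}M'=(M\setminus{}^\bullet e)\cup e^\bullet$. $e_1 I e_2$ (independence) iff $({}^\bullet e_1\cup e_1^\bullet)\cap({}^\bullet e_2\cup e_2^\bullet)=\emptyset$. A sequence $e_1\dots e_n$ from $M$ goes through markings $M=M_0\xrightarrow{e_1}M_1\cdots\xrightarrow{e_n}M_n$; these $M_j$ are its markings. A sequence $\pi$ from $M$ is of form $\Pi\cdot\Pi'$ if $\pi=\pi_1\cdot\pi_2$ (concatenation) with $\pi_1$ of form $\Pi$ from $M$ and $\pi_2$ of form $\Pi'$ from the marking reached by $\pi_1$; it is of form $\Pi^*$ if it is a finite concatenation (possibly empty) of sequences of form $\Pi$ in this sense. Conditions: a set $\mathcal C$ of control conditions with distinguished elements $\iota,\tau$ closed under injective constructors $1{:}c$, $2{:}c$, $(c,c')$ with disjoint images; a disjoint set $\mathcal S$ of state conditions. Markings are written $(C,\sigma)$, $C\subseteq\mathcal C,\sigma\subseteq\mathcal S$; ${}^Ce={}^\bullet e\cap\mathcal C$, $e^C=e^\bullet\cap\mathcal C$. An embedded net $N$: events $\mathrm{Ev}(N)$ over conditions $\mathcal C\cup\mathcal S$ and sets $I(N),T(N)\subseteq\mathcal C$. Control firing $C\xrightarrow{e}_{\mathcal C}C'$: ${}^Ce\subseteq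 C$, $(C\setminus{}^Ce)\cap e^C=\emptyset$, $C'=(C\setminus{}^Ce)\cup e^C$; control-reachability via events of the net. Standing assumption: all embedded nets satisfy $I(N),T(N)\neq\emptyset$; ${}^Ce,e^C\neq\emptyset$ for all events; $I(N)\cap T(N)=\emptyset$; ${}^Ce\cap T(N)=\emptyset$; and for all $C$ control-reachable from $I(N)$: $C\subseteq I(N)$ or $I(N)\subseteq C$ implies $C=I(N)$, and $C\subseteq T(N)$ or $T(N)\subseteq C$ implies $C=T(N)$. Tagging $1{:}C$, $1{:}e$ (tag control conditions only), similarly $2$. Gluing for $P\subseteq\mathcal C\times\mathcal C$: $P\triangleleft C=\{(c_1,c_2)\mid c_1\in C,(c_1,c_2)\in P\}\cup\{c_1\in C\mid\nexists c_2.(c_1,c_2)\in P\}$, $P\triangleright C=\{(c_1,c_2)\mid c_2\in C,(c_1,c_2)\in P\}\cup\{c_2\in C\mid\nexists c_1.(c_1,c_2)\in P\}$, applied to events on control conditions only. A context $K$ is an embedded net with a distinguished event $[-]$ whose pre/postconditions are control conditions, forming disjoint nonempty sets. $P_i=1{:}{}^\bullet[-]\times 2{:}I(N)$, $P_t=1{:}[-]^\bullet\times 2{:}T(N)$, $P=P_i\cup P_t$. $K[N]$ has events $P\triangleleft1{:}(\mathrm{Ev}(K)\setminus\{[-]\})\cup P\triangleright 2{:}\mathrm{Ev}(N)$, $I(K[N])=P\triangleleft1{:}I(K)$, $T(K[N])=P\triangleleft 1{:}T(K)$. $N$-events: $P\triangleright 2{:}e$, $e\in\mathrm{Ev}(N)$;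 $K$-events: $P\triangleleft1{:}e$, $e\in\mathrm{Ev}(K)\setminus\{[-]\}$. Standing assumption: no event of $K[N]$ is both a $K$-event and an $N$-event. A $K$-condition is $1{:}c_1$ with $c_1\in\mathcal C\setminus({}^\bullet[-]\cup[-]^\bullet)$; an $N$-internal condition is $2{:}c_2$ with $c_2\notin I(N)\cup T(N)$; an $N$-condition is an element of $P_i\cup P_t$ or an $N$-internal condition. A marking is written $(C_N\cup C_K,\sigma)$ with $C_N$ its $N$-conditions and $C_K$ its $K$-conditions. It is an $N$-marking if for all $a,a'\in{}^\bullet[-]$, $x,x'\in[-]^\bullet$, $i\in I(N)$, $t\in T(N)$: $(1{:}a,2{:}i)\in C_N\Rightarrow(1{:}a',2{:}i)\in C_N$ and $(1{:}x,2{:}t)\in C_N\Rightarrow(1{:}x',2{:}t)\in C_N$. It is a $K$-marking if it contains no $N$-internal condition and for all $a\in{}^\bullet[-]$, $x\in[-]^\bullet$, $i,i'\in I(N)$, $t,t'\in T(N)$: $(1{:}a,2{:}i)\in C_N\Rightarrow(1{:}a,2{:}i')\in C_N$ and $(1{:}x,2{:}t)\in C_N\Rightarrow(1{:}x,2{:}t')\in C_N$. A condition is internal to $N$ if it is $2{:}c_2$ with $c_2$ a pre- or postcondition of an event of $N$ not in $I(N)\cup T(N)$; $N$ is active in $M$ if $P_i\subseteq M$ or $M$ contains a condition internal to $N$. $K[N]$ is a non-interfering substitution from $\sigma_0$ if for every $M$ reachable from $(I(K[N]),\sigma_0)$: (1) $P_i\subseteq M$ implies $P_t\cap M=\emptyset$;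 (2) if $N$ is active in $M$, no $K$-event enabled in $M$ has a pre- or postcondition in $P_i\cup P_t$; (3) if $M\xrightarrow{e_1}M_1\xrightarrow{e_2}M'$, one of $e_1,e_2$ an $N$-event and the other a $K$-event, and $N$ active in $M$ and $M_1$, then $e_1Ie_2$. *)

From Stdlib Require Import List.
Import ListNotations.
Set Implicit Arguments.

(** Control conditions: an abstract set with distinguished iota, tau and
    injective constructors 1:c, 2:c, (c,c') with pairwise disjoint images. *)
Record CondStruct := {
  ctrl : Type;
  iota : ctrl;
  tau : ctrl;
  t1 : ctrl -> ctrl;
  t2 : ctrl -> ctrl;
  cpair : ctrl -> ctrl -> ctrl;
  t1_inj : forall x y, t1 x = t1 y -> x = y;
  t2_inj : forall x y, t2 x = t2 y -> x = y;
  cpair_inj : forall a b c d, cpair a b = cpair c d -> a = c /\ b = d;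
  t1_t2 : forall x y, t1 x <> t2 y;
  t1_cpair : forall x y z, t1 x <> cpair y z;
  t2_cpair : forall x y z, t2 x <> cpair y z
}.

Section Nets.
Context {CS : CondStruct} {S : Type}.

(** Conditions = control conditions (inl) + state conditions (inr), disjoint. *)
Definition cond := (ctrl CS + S)%type.
Definition cset := ctrl CS -> Prop.
Definition marking := cond -> Prop.

(** An event is identified with its pair (preconditions, postconditions). *)
Record event := Event { pre : cond -> Prop; post : cond -> Prop }.

Definition ctl_pre (e : event) : cset := fun c => pre e (inl c).
Definition ctl_post (e : event) : cset := fun c => post e (inl c).

Definition subset (A B : cset) := forall c, A c -> B c.
Definition seteq (A B : cset) := forall c, A c <-> B c.

Definition concession (M : marking) (e : event) : Prop :=
  (forall x, pre e x -> M x) /\ (forall x, M x -> ~ pre e x -> ~ post e x).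
Definition fire (M : marking) (e : event) : marking :=
  fun x => (M x /\ ~ pre e x) \/ post e x.
Definition indep (e1 e2 : event) : Prop :=
  forall x, (pre e1 x \/ post e1 x) -> (pre e2 x \/ post e2 x) -> False.

Record net := { Ev : event -> Prop; Ini : cset; Ter : cset }.

Definition cfire (C : cset) (e : event) (C' : cset) : Prop :=
  subset (ctl_pre e) C /\
  (forall c, C c -> ~ ctl_pre e c -> ~ ctl_post e c) /\
  (forall c, C' c <-> ((C c /\ ~ ctl_pre e c) \/ ctl_post e c)).

Inductive creach (N : net) : cset -> Prop :=
| creach0 : creach N (Ini N)
| creach_step : forall C e C', creach N C -> Ev N e -> cfire C e C' -> creach N C'.

Definition wf_net (N : net) : Prop :=
  (exists c, Ini N c) /\ (exists c, Ter N c) /\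
  (forall e, Ev N e -> (exists c, ctl_pre e c) /\ (exists c, ctl_post e c)) /\
  (forall c, Ini N c -> Ter N c -> False) /\
  (forall e c, Ev N e -> ctl_pre e c -> Ter N c -> False) /\
  (forall C, creach N C -> (subset C (Ini N) \/ subset (Ini N) C) -> seteq C (Ini N)) /\
  (forall C, creach N C -> (subset C (Ter N) \/ subset (Ter N) C) -> seteq C (Ter N)).

Record ctx := { knet : net; hole : event }.

Definition wf_ctx (K : ctx) : Prop :=
  wf_net (knet K) /\ Ev (knet K) (hole K) /\
  (forall s, ~ pre (hole K) (inr s)) /\ (forall s, ~ post (hole K) (inr s)) /\
  (exists c, ctl_pre (hole K) c) /\ (exists c, ctl_post (hole K) c) /\
  (forall c, ctl_pre (hole K) c -> ctl_post (hole K) c -> False).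

Definition liftc (g : cset -> cset) (X : cond -> Prop) : cond -> Prop :=
  fun x => match x with
           | inl c => g (fun c' => X (inl c')) c
           | inr s => X (inr s)
           end.
Definition map_ev (g : cset -> cset) (e : event) : event :=
  Event (liftc g (pre e)) (liftc g (post e)).

Definition tagc (f : ctrl CS -> ctrl CS) (X : cset) : cset :=
  fun c => exists c', c = f c' /\ X c'.

Definition glueL (P : ctrl CS -> ctrl CS -> Prop) (X : cset) : cset :=
  fun c => (exists c1 c2, c = cpair CS c1 c2 /\ X c1 /\ P c1 c2)
           \/ (X c /\ ~ exists c2, P c c2).
Definition glueR (P : ctrl CS -> ctrl CS -> Prop) (X : cset) : cset :=
  fun c => (exists c1 c2, c = cpair CS c1 c2 /\ X c2 /\ P c1 c2)
           \/ (X c /\ ~ exists c1, P c1 c).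

Fixpoint run (E : event -> Prop) (M : marking) (l : list event) : Prop :=
  match l with
  | [] => True
  | e :: l' => E e /\ concession M e /\ run E (fire M e) l'
  end.

Definition fire_seq (M : marking) (l : list event) : marking := fold_left fire l M.

Fixpoint marks (M : marking) (l : list event) : list marking :=
  match l with
  | [] => [M]
  | e :: l' => M :: marks (fire M e) l'
  end.

Inductive reach (E : event -> Prop) (M : marking) : marking -> Prop :=
| reach0 : reach E M M
| reach_step : forall M1 e, reach E M M1 -> E e -> concession M1 e -> reach E M (fire M1 e).

Definition form := marking -> list event -> Prop.

Definition form_cat (F G : form) : form :=
  fun M pi => exists pi1 pi2, pi = pi1 ++ pi2 /\ F M pi1 /\ G (fire_seq M pi1) pi2.

Inductive form_star (F : form) : marking -> list event -> Prop :=
| fs_nil : forall M, form_star F M []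
| fs_cons : forall M pi1 pi2, F M pi1 -> form_star F (fire_seq M pi1) pi2 ->
                              form_star F M (pi1 ++ pi2).

Section Subst.
Variables (K : ctx) (N : net).

Definition hpre : cset := ctl_pre (hole K).
Definition hpost : cset := ctl_post (hole K).

(** P_i = 1:•[-] × 2:I(N), P_t = 1:[-]• × 2:T(N), P = P_i ∪ P_t (as relations). *)
Definition Pi_rel (c1 c2 : ctrl CS) : Prop := tagc (t1 CS) hpre c1 /\ tagc (t2 CS) (Ini N) c2.
Definition Pt_rel (c1 c2 : ctrl CS) : Prop := tagc (t1 CS) hpost c1 /\ tagc (t2 CS) (Ter N) c2.
Definition P_rel (c1 c2 : ctrl CS) : Prop := Pi_rel c1 c2 \/ Pt_rel c1 c2.

Definition Pi_set : cset := fun c => exists c1 c2, c = cpair CS c1 c2 /\ Pi_rel c1 c2.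
Definition Pt_set : cset := fun c => exists c1 c2, c = cpair CS c1 c2 /\ Pt_rel c1 c2.

Definition Kev (e : event) : Prop :=
  exists e', Ev (knet K) e' /\ e' <> hole K /\
             e = map_ev (glueL P_rel) (map_ev (tagc (t1 CS)) e').
Definition Nev (e : event) : Prop :=
  exists e', Ev N e' /\ e = map_ev (glueR P_rel) (map_ev (tagc (t2 CS)) e').
Definition EvKN (e : event) : Prop := Kev e \/ Nev e.

Definition I_KN : cset := glueL P_rel (tagc (t1 CS) (Ini (knet K))).
Definition T_KN : cset := glueL P_rel (tagc (t1 CS) (Ter (knet K))).

Definition KN_disjoint : Prop := forall e, Kev e -> Nev e -> False.

Definition init_mark (sigma0 : S -> Prop) : marking :=
  fun x => match x with inl c => I_KN c | inr s => sigma0 s end.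

Definition Ninternal (c : ctrl CS) : Prop :=
  exists c2, c = t2 CS c2 /\ ~ Ini N c2 /\ ~ Ter N c2.
Definition Ncond (c : ctrl CS) : Prop := Pi_set c \/ Pt_set c \/ Ninternal c.

Definition Nmarking (M : marking) : Prop :=
  (forall a a' i, hpre a -> hpre a' -> Ini N i ->
     M (inl (cpair CS (t1 CS a) (t2 CS i))) -> M (inl (cpair CS (t1 CS a') (t2 CS i)))) /\
  (forall x x' t, hpost x -> hpost x' -> Ter N t ->
     M (inl (cpair CS (t1 CS x) (t2 CS t))) -> M (inl (cpair CS (t1 CS x') (t2 CS t)))).

Definition Kmarking (M : marking) : Prop :=
  (forall c, Ninternal c -> ~ M (inl c)) /\
  (forall a i i', hpre a -> Ini N i -> Ini N i' ->
     M (inl (cpair CS (t1 CS a) (t2 CS i))) -> M (inl (cpair CS (t1 CS a) (t2 CS i')))) /\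
  (forall x t t', hpost x -> Ter N t -> Ter N t' ->
     M (inl (cpair CS (t1 CS x) (t2 CS t))) -> M (inl (cpair CS (t1 CS x) (t2 CS t')))).

Definition internal_to_N (c : ctrl CS) : Prop :=
  exists c2, c = t2 CS c2 /\
    (exists e, Ev N e /\ (ctl_pre e c2 \/ ctl_post e c2)) /\
    ~ Ini N c2 /\ ~ Ter N c2.
Definition active (M : marking) : Prop :=
  (forall c, Pi_set c -> M (inl c)) \/ (exists c, internal_to_N c /\ M (inl c)).

Definition touchesP (e : event) : Prop :=
  exists c, (Pi_set c \/ Pt_set c) /\ (pre e (inl c) \/ post e (inl c)).

Definition non_interfering (sigma0 : S -> Prop) : Prop :=
  forall M, reach EvKN (init_mark sigma0) M ->
    ((forall c, Pi_set c -> M (inl c)) -> forall c, Pt_set c -> ~ M (inl c)) /\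
    (active M -> forall e, Kev e -> concession M e -> ~ touchesP e) /\
    (forall e1 e2, concession M e1 -> concession (fire M e1) e2 ->
       ((Nev e1 /\ Kev e2) \/ (Kev e1 /\ Nev e2)) ->
       active M -> active (fire M e1) -> indep e1 e2).

(** C_N (the N-conditions of M) equals X. *)
Definition CN_eq (M : marking) (X : cset) : Prop :=
  forall c, (M (inl c) /\ Ncond c) <-> X c.

Definition Pi0 : form := fun M pi =>
  Forall Kev pi /\ Forall Kmarking (marks M pi).

Definition Pi1 : form := fun M pi =>
  pi <> [] /\ Forall EvKN pi /\ Forall Nmarking (marks M pi) /\
  Forall (fun e => Kev e -> ~ touchesP e) pi /\
  CN_eq M Pi_set /\ CN_eq (fire_seq M pi) Pt_set /\
  (exists e l, pi = e :: l /\ Nev e) /\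
  (exists l e, pi = l ++ [e] /\ Nev e).

End Subst.
End Nets.

(** While no N-event has fired, every marking is a K-marking and K-events keep
    it so.  An N-event can only fire once all of [P_i] is marked; from then on
    the N-conditions of the marking are exactly the image of a control state [C]
    of [N] reachable from [I(N)], N-events move [C] as in [N], and
    non-interference forbids enabled K-events to touch [P_i ∪ P_t] (for the
    states that make [N] inactive, concession alone forbids it).  Since the final
    marking [T(K[N])] contains neither [P_i] nor N-internal conditions, [C] must
    reach [T(N)], where the marking is a K-marking again. *)
From Stdlib Require Import List Classical Lia.
Import ListNotations.

Section Runs.
Context {CS : CondStruct} {S : Type}.

Lemma fire_seq_app (M : @marking CS S) l1 l2 :
  fire_seq M (l1 ++ l2) = fire_seq (fire_seq M l1) l2.
Proof. apply fold_left_app. Qed.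

Lemma run_appE E (M : @marking CS S) l1 l2 :
  run E M (l1 ++ l2) <-> run E M l1 /\ run E (fire_seq M l1) l2.
Proof.
  revert M; induction l1 as [|e l1 IH]; intros M; simpl; [tauto|].
  rewrite IH. tauto.
Qed.

Lemma reach_run {E} {M0 M : @marking CS S} {l} :
  reach E M0 M -> run E M l -> reach E M0 (fire_seq M l).
Proof.
  revert M; induction l as [|e l IH]; intros M Hr; [easy|].
  intros (He & Hc & Hrun). apply IH; [apply reach_step|]; assumption.
Qed.

Lemma form_cat_cons (F G : form) (M : @marking CS S) e pi :
  (forall l, F (fire M e) l -> F M (e :: l)) ->
  form_cat F G (fire M e) pi -> form_cat F G M (e :: pi).
Proof.
  intros HF (l1 & l2 & -> & H1 & H2). exists (e :: l1), l2. auto.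
Qed.

Lemma form_star_cat (F G : form) (M : @marking CS S) p q :
  F M p -> form_cat G (form_star (form_cat F G)) (fire_seq M p) q ->
  form_star (form_cat F G) M (p ++ q).
Proof.
  intros HF (q1 & q2 & -> & HG & Hstar).
  rewrite app_assoc. apply fs_cons.
  - exists p, q1. auto.
  - rewrite fire_seq_app. exact Hstar.
Qed.

End Runs.

Section Substitution.
Variables (CS : CondStruct) (S : Type) (K : @ctx CS S) (N : @net CS S).
Hypothesis HK : wf_ctx K.
Hypothesis HN : wf_net N.

Notation T1 := (t1 CS).
Notation T2 := (t2 CS).
Notation IN := (Ini N).
Notation TN := (Ter N).
Notation pcond a j := (cpair CS (t1 CS a) (t2 CS j)).

Definition glued (a j : ctrl CS) : Prop := (hpre K a /\ IN j) \/ (hpost K a /\ TN j).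
Definition Kimage (X : cset) : cset := glueL (P_rel K N) (tagc T1 X).
Definition Nimage (X : cset) : cset := glueR (P_rel K N) (tagc T2 X).
Definition Klift (e : @event CS S) : event := map_ev (glueL (P_rel K N)) (map_ev (tagc T1) e).
Definition Nlift (e : @event CS S) : event := map_ev (glueR (P_rel K N)) (map_ev (tagc T2) e).

Lemma Klift_pre e c : pre (Klift e) (inl c) = Kimage (ctl_pre e) c.
Proof. reflexivity. Qed.
Lemma Klift_post e c : post (Klift e) (inl c) = Kimage (ctl_post e) c.
Proof. reflexivity. Qed.
Lemma Nlift_pre e c : pre (Nlift e) (inl c) = Nimage (ctl_pre e) c.
Proof. reflexivity. Qed.
Lemma Nlift_post e c : post (Nlift e) (inl c) = Nimage (ctl_post e) c.
Proof. reflexivity. Qed.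

Lemma Kev_inv {e} : Kev K N e -> exists e', Ev (knet K) e' /\ e' <> hole K /\ e = Klift e'.
Proof. easy. Qed.
Lemma Nev_inv {e} : Nev K N e -> exists e', Ev N e' /\ e = Nlift e'.
Proof. easy. Qed.

Lemma hpre_nonempty : exists a, hpre K a.
Proof. apply HK. Qed.
Lemma hpost_nonempty : exists a, hpost K a.
Proof. apply HK. Qed.
Lemma hpre_hpost_disjoint {a} : hpre K a -> hpost K a -> False.
Proof. apply HK. Qed.
Lemma hpre_not_Ter {a} : hpre K a -> Ter (knet K) a -> False.
Proof. destruct HK as ((_ & _ & _ & _ & H & _) & Hh & _). exact (H _ _ Hh). Qed.
Lemma Ini_nonempty : exists i, IN i.
Proof. apply HN. Qed.
Lemma Ini_Ter_disjoint {j} : IN j -> TN j -> False.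
Proof. apply HN. Qed.
Lemma Ev_pre_nonempty {e} : Ev N e -> exists c, ctl_pre e c.
Proof. apply HN. Qed.
Lemma Ev_pre_not_Ter {e c} : Ev N e -> ctl_pre e c -> TN c -> False.
Proof. apply HN. Qed.
Lemma creach_seteq_Ini {C} : creach N C -> subset C IN \/ subset IN C -> seteq C IN.
Proof. apply HN. Qed.
Lemma creach_seteq_Ter {C} : creach N C -> subset C TN \/ subset TN C -> seteq C TN.
Proof. apply HN. Qed.

Lemma tagc_inj_iff (f : ctrl CS -> ctrl CS) X a :
  (forall x y, f x = f y -> x = y) -> tagc f X (f a) <-> X a.
Proof.
  intros Hf; split.
  - intros (a' & E & H). apply Hf in E as ->. exact H.
  - intros H. exists a. auto.
Qed.

Lemma P_rel_pcond a j : P_rel K N (T1 a) (T2 j) <-> glued a j.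
Proof.
  unfold P_rel, Pi_rel, Pt_rel, glued.
  rewrite !(tagc_inj_iff T1 _ _ (t1_inj CS)), !(tagc_inj_iff T2 _ _ (t2_inj CS)).
  reflexivity.
Qed.

Lemma P_rel_shape {c1 c2} : P_rel K N c1 c2 -> exists a j, c1 = T1 a /\ c2 = T2 j.
Proof.
  intros [[(a & -> & _) (j & -> & _)] | [(a & -> & _) (j & -> & _)]]; eauto.
Qed.

Lemma pcond_inj {a j a' j'} : pcond a j = pcond a' j' -> a = a' /\ j = j'.
Proof.
  intros (E1 & E2)%cpair_inj. split; [apply (t1_inj CS) | apply (t2_inj CS)]; assumption.
Qed.

Lemma Kimage_pcond X a j : Kimage X (pcond a j) <-> X a /\ glued a j.
Proof.
  rewrite <- P_rel_pcond. split.
  - intros [(c1 & c2 & (<- & <-)%cpair_inj & H1 & H2) | ((a' & E & _) & _)].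
    + rewrite (tagc_inj_iff T1 _ _ (t1_inj CS)) in H1. auto.
    + symmetry in E. now apply t1_cpair in E.
  - intros [HX HP]. left. exists (T1 a), (T2 j).
    rewrite (tagc_inj_iff T1 _ _ (t1_inj CS)). auto.
Qed.

Lemma Kimage_t2 {X j} : ~ Kimage X (T2 j).
Proof.
  intros [(c1 & c2 & E & _) | ((c & E & _) & _)].
  - now apply t2_cpair in E.
  - symmetry in E. now apply t1_t2 in E.
Qed.

Lemma Nimage_cases {X c} : Nimage X c -> (exists a j, c = pcond a j) \/ (exists j, c = T2 j).
Proof.
  intros [(c1 & c2 & -> & _ & (a & j & -> & ->)%P_rel_shape) | ((j & -> & _) & _)]; eauto.
Qed.

Lemma Nimage_pcond X a j : Nimage X (pcond a j) <-> X j /\ glued a j.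
Proof.
  rewrite <- P_rel_pcond. split.
  - intros [(c1 & c2 & (<- & <-)%cpair_inj & H1 & H2) | ((j' & E & _) & _)].
    + rewrite (tagc_inj_iff T2 _ _ (t2_inj CS)) in H1. auto.
    + symmetry in E. now apply t2_cpair in E.
  - intros [HX HP]. left. exists (T1 a), (T2 j).
    rewrite (tagc_inj_iff T2 _ _ (t2_inj CS)). auto.
Qed.

(* Gluing needs both [•[-]] and [[-]•] nonempty to leave no tagged copy of [I(N) ∪ T(N)]. *)
Lemma Nimage_t2 X j : Nimage X (T2 j) <-> X j /\ ~ IN j /\ ~ TN j.
Proof.
  split.
  - intros [(c1 & c2 & E & _) | (HX & Hno)]; [now apply t2_cpair in E|].
    rewrite (tagc_inj_iff T2 _ _ (t2_inj CS)) in HX.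
    destruct hpre_nonempty as [a Ha], hpost_nonempty as [x Hx].
    split; [exact HX|]. split; intros Hj; apply Hno.
    + exists (T1 a). apply P_rel_pcond. left; auto.
    + exists (T1 x). apply P_rel_pcond. right; auto.
  - intros (HX & Hi & Ht). right. split.
    + now apply (tagc_inj_iff T2 _ _ (t2_inj CS)).
    + intros (c1 & HP). destruct (P_rel_shape HP) as (a & j' & -> & E).
      apply (t2_inj CS) in E as <-. apply P_rel_pcond in HP. unfold glued in HP. tauto.
Qed.

Lemma Nimage_ext X Y c : seteq X Y -> Nimage X c <-> Nimage Y c.
Proof.
  intros Hs. destruct (classic (Nimage X c \/ Nimage Y c)) as [H | H]; [|tauto].
  destruct H as [H | H]; apply Nimage_cases in H as [(a & j & ->) | (j & ->)];
    rewrite ?Nimage_pcond, ?Nimage_t2, (Hs j); reflexivity.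
Qed.

Lemma Pi_setE c : Pi_set K N c <-> exists a j, c = pcond a j /\ hpre K a /\ IN j.
Proof.
  split.
  - intros (c1 & c2 & -> & (a & -> & Ha) & (j & -> & Hj)). eauto.
  - intros (a & j & -> & Ha & Hj). exists (T1 a), (T2 j). split; [reflexivity|].
    split; eexists; eauto.
Qed.

Lemma Pt_setE c : Pt_set K N c <-> exists a j, c = pcond a j /\ hpost K a /\ TN j.
Proof.
  split.
  - intros (c1 & c2 & -> & (a & -> & Ha) & (j & -> & Hj)). eauto.
  - intros (a & j & -> & Ha & Hj). exists (T1 a), (T2 j). split; [reflexivity|].
    split; eexists; eauto.
Qed.

Lemma Nimage_Ini c : Nimage IN c <-> Pi_set K N c.
Proof.
  rewrite Pi_setE. split.
  - intros H. destruct (Nimage_cases H) as [(a & j & ->) | (j & ->)].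
    + apply Nimage_pcond in H as (Hj & [H | (_ & Ht)]); [eauto|].
      destruct (Ini_Ter_disjoint Hj Ht).
    + apply Nimage_t2 in H. tauto.
  - intros (a & j & -> & Ha & Hj). apply Nimage_pcond. split; [|left]; auto.
Qed.

Lemma Nimage_Ter c : Nimage TN c <-> Pt_set K N c.
Proof.
  rewrite Pt_setE. split.
  - intros H. destruct (Nimage_cases H) as [(a & j & ->) | (j & ->)].
    + apply Nimage_pcond in H as (Hj & [(_ & Hi) | H]); [|eauto].
      destruct (Ini_Ter_disjoint Hi Hj).
    + apply Nimage_t2 in H. tauto.
  - intros (a & j & -> & Ha & Hj). apply Nimage_pcond. split; [|right]; auto.
Qed.

Lemma glued_Ncond {a j} : glued a j -> Ncond K N (pcond a j).
Proof.
  intros [H | H]; [left; apply Pi_setE | right; left; apply Pt_setE]; exists a, j; tauto.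
Qed.

Lemma Nimage_Ncond {X c} : Nimage X c -> Ncond K N c.
Proof.
  intros H. destruct (Nimage_cases H) as [(a & j & ->) | (j & ->)].
  - apply Nimage_pcond in H as [_ H]. exact (glued_Ncond H).
  - apply Nimage_t2 in H. right; right. exists j. tauto.
Qed.

Definition represents (c j : ctrl CS) : Prop := forall X, Nimage X c <-> X j.

Lemma Ncond_represents {c} : Ncond K N c -> exists j, represents c j.
Proof.
  intros [(a & j & -> & Ha & Hj)%Pi_setE | [(a & j & -> & Ha & Hj)%Pt_setE | (j & -> & Hi & Ht)]];
    exists j; intros X; rewrite ?Nimage_pcond, ?Nimage_t2; unfold glued; tauto.
Qed.

Lemma represents_exists j : exists c, Ncond K N c /\ represents c j.
Proof.
  destruct (classic (IN j)) as [Hi | Hi]; [|destruct (classic (TN j)) as [Ht | Ht]].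
  - destruct hpre_nonempty as [a Ha]. exists (pcond a j).
    split; [apply glued_Ncond; left; auto|].
    intros X. rewrite Nimage_pcond. unfold glued. tauto.
  - destruct hpost_nonempty as [a Ha]. exists (pcond a j).
    split; [apply glued_Ncond; right; auto|].
    intros X. rewrite Nimage_pcond. unfold glued. tauto.
  - exists (T2 j). split; [right; right; exists j; auto|].
    intros X. rewrite Nimage_t2. tauto.
Qed.

Lemma Kmarking_Kimage (M : @marking CS S) X :
  (forall c, M (inl c) <-> Kimage X c) -> Kmarking K N M.
Proof.
  intros HM. split; [|split].
  - intros c (j & -> & _) H. apply HM in H. exact (Kimage_t2 H).
  - intros a i i' Ha Hi Hi'. rewrite !HM, !Kimage_pcond. unfold glued. tauto.
  - intros x t t' Hx Ht Ht'. rewrite !HM, !Kimage_pcond. unfold glued. tauto.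
Qed.

Lemma Kmarking_fire_Kev {M e} : Kmarking K N M -> Kev K N e -> Kmarking K N (fire M e).
Proof.
  intros (HKi & HKa & HKx) (e' & _ & _ & ->)%Kev_inv. unfold fire.
  split; [|split].
  - intros c Hc [[HM _] | Hp]; [exact (HKi c Hc HM)|].
    destruct Hc as (j & -> & _). rewrite Klift_post in Hp. exact (Kimage_t2 Hp).
  - intros a i i' Ha Hi Hi'. rewrite !Klift_pre, !Klift_post, !Kimage_pcond.
    specialize (HKa a i i' Ha Hi Hi'). unfold glued. tauto.
  - intros x t t' Hx Ht Ht'. rewrite !Klift_pre, !Klift_post, !Kimage_pcond.
    specialize (HKx x t t' Hx Ht Ht'). unfold glued. tauto.
Qed.

Lemma CN_eq_Pt_Kmarking {M} : CN_eq K N M (Pt_set K N) -> Kmarking K N M.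
Proof.
  intros HM.
  assert (HPt : forall c, Ncond K N c -> M (inl c) -> Pt_set K N c)
    by (intros c Hc HMc; apply HM; auto).
  split; [|split].
  - intros c Hc HMc. apply HPt, Pt_setE in HMc as (a & j & E & _); [|right; right; exact Hc].
    destruct Hc as (j' & -> & _). now apply t2_cpair in E.
  - intros a i i' Ha Hi Hi' HMc. exfalso.
    assert (Hc : Ncond K N (pcond a i)) by (apply glued_Ncond; left; auto).
    apply HPt, Pt_setE in HMc as (x & t & (<- & <-)%pcond_inj & Hx & _); [|exact Hc].
    exact (hpre_hpost_disjoint Ha Hx).
  - intros x t t' Hx Ht Ht' _. apply HM, Pt_setE. eauto.
Qed.

Definition N_state (M : @marking CS S) (C : cset) : Prop :=
  creach N C /\ CN_eq K N M (Nimage C).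

Lemma CN_eq_represents {M C c j} :
  CN_eq K N M (Nimage C) -> Ncond K N c -> represents c j -> (M (inl c) <-> C j).
Proof. intros HM Hc Hrep. rewrite <- (Hrep C). pose proof (HM c). tauto. Qed.

Lemma CN_eq_Nimage_seteq {M C X Y} :
  CN_eq K N M (Nimage C) -> seteq C X -> (forall c, Nimage X c <-> Y c) -> CN_eq K N M Y.
Proof. intros HM Hs HY c. unfold CN_eq in HM. rewrite HM, <- HY. exact (Nimage_ext _ _ _ Hs). Qed.

Lemma N_state_Nmarking {M C} : N_state M C -> Nmarking K N M.
Proof.
  intros [_ HM].
  assert (Hpc : forall a j, glued a j -> M (inl (pcond a j)) <-> C j).
  { intros a j Hg. pose proof (Nimage_pcond C a j). pose proof (HM (pcond a j)).
    pose proof (glued_Ncond Hg). tauto. }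
  split.
  - intros a a' i Ha Ha' Hi. rewrite !Hpc by (left; auto). auto.
  - intros x x' t Hx Hx' Ht. rewrite !Hpc by (right; auto). auto.
Qed.

Lemma Kev_untouched_Ncond {e c} : Kev K N e -> ~ touchesP K N e -> Ncond K N c ->
  ~ pre e (inl c) /\ ~ post e (inl c).
Proof.
  intros HKe Ht [Hc | [Hc | (j & -> & _)]];
    [split; intros Hp; apply Ht; exists c; auto .. |].
  destruct (Kev_inv HKe) as (e' & _ & _ & ->).
  rewrite Klift_pre, Klift_post. split; apply Kimage_t2.
Qed.

Lemma N_state_fire_Kev {M C e} : N_state M C -> Kev K N e -> ~ touchesP K N e ->
  N_state (fire M e) C.
Proof.
  intros [Hc HM] HKe Ht. split; [exact Hc|].
  intros c. specialize (HM c). unfold fire.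
  destruct (classic (Ncond K N c)) as [Hn | Hn]; [|tauto].
  pose proof (Kev_untouched_Ncond HKe Ht Hn). tauto.
Qed.

Definition cafter (C : cset) (e : @event CS S) : cset :=
  fun c => (C c /\ ~ ctl_pre e c) \/ ctl_post e c.

Lemma CN_eq_fire_Nlift {M C} e :
  CN_eq K N M (Nimage C) -> CN_eq K N (fire M (Nlift e)) (Nimage (cafter C e)).
Proof.
  intros HM c. unfold fire. rewrite Nlift_pre, Nlift_post.
  assert (Hc : Ncond K N c -> exists j, represents c j /\ (M (inl c) <-> C j)).
  { intros Hc. destruct (Ncond_represents Hc) as [j Hrep].
    exists j. split; [exact Hrep | exact (CN_eq_represents HM Hc Hrep)]. }
  split.
  - intros [H (j & Hrep & HMj)%Hc]. apply Hrep. unfold cafter.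
    pose proof (Hrep (ctl_pre e)). pose proof (Hrep (ctl_post e)). tauto.
  - intros H. pose proof (Nimage_Ncond H) as Hn. split; [|exact Hn].
    destruct (Hc Hn) as (j & Hrep & HMj). apply Hrep in H. unfold cafter in H.
    pose proof (Hrep (ctl_pre e)). pose proof (Hrep (ctl_post e)). tauto.
Qed.

Lemma concession_Nlift_cfire {M C e} :
  CN_eq K N M (Nimage C) -> concession M (Nlift e) -> cfire C e (cafter C e).
Proof.
  intros HM [Hpre Hpost]. split; [|split; [|reflexivity]].
  - intros j Hj. destruct (represents_exists j) as (c & Hc & Hrep).
    apply (CN_eq_represents HM Hc Hrep), Hpre. rewrite Nlift_pre. apply Hrep, Hj.
  - intros j Hj Hnp Hp. destruct (represents_exists j) as (c & Hc & Hrep).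
    apply (Hpost (inl c)); rewrite ?Nlift_pre, ?Nlift_post.
    + apply (CN_eq_represents HM Hc Hrep), Hj.
    + rewrite (Hrep (ctl_pre e)). exact Hnp.
    + apply Hrep, Hp.
Qed.

Lemma N_state_fire_Nev {M C e} : N_state M C -> Ev N e -> concession M (Nlift e) ->
  N_state (fire M (Nlift e)) (cafter C e).
Proof.
  intros [Hc HM] He Hcon. split.
  - exact (creach_step Hc He (concession_Nlift_cfire HM Hcon)).
  - exact (CN_eq_fire_Nlift e HM).
Qed.

Lemma CN_eq_Nimage_mem {M C c} : CN_eq K N M (Nimage C) -> Nimage C c -> M (inl c).
Proof. intros HM H. apply HM, H. Qed.

Lemma creach_origin {C} : creach N C -> forall j, C j ->
  IN j \/ exists e, Ev N e /\ ctl_post e j.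
Proof.
  induction 1 as [|C e C' _ IH He (_ & _ & HC')]; intros j Hj; [now left|].
  apply HC' in Hj as [[Hj _] | Hj]; [exact (IH j Hj) | right; eauto].
Qed.

Lemma N_state_active {M C} : N_state M C ->
  subset IN C \/ (exists j, C j /\ ~ IN j /\ ~ TN j) -> active K N M.
Proof.
  intros [Hc HM] [HI | (j & Hj & Hi & Ht)].
  - left. intros c Hp.
    apply (CN_eq_Nimage_seteq HM (creach_seteq_Ini Hc (or_intror HI)) Nimage_Ini) in Hp.
    exact (proj1 Hp).
  - right. exists (T2 j). split.
    + exists j. destruct (creach_origin Hc j Hj) as [Hi' | (e & He & Hp)]; [tauto|].
      split; [reflexivity|]. split; [exists e|]; auto.
    + apply (CN_eq_Nimage_mem HM), Nimage_t2. auto.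
Qed.

(* A K-event cannot consume a glued copy of [a] (one copy is missing), and it
   cannot produce one either (another copy is already there). *)
Lemma Kev_ignores_split {M C e a} {Q : cset} {j0 j1} :
  CN_eq K N M (Nimage C) -> concession M (Klift e) -> (forall j, Q j -> glued a j) ->
  Q j0 -> ~ C j0 -> Q j1 -> C j1 -> ~ ctl_pre e a /\ ~ ctl_post e a.
Proof.
  intros HM [Hpre Hpost] HQ Qj0 Cj0 Qj1 Cj1.
  assert (HMa : forall j, Q j -> M (inl (pcond a j)) <-> C j).
  { intros j Qj. pose proof (HM (pcond a j)). pose proof (Nimage_pcond C a j).
    pose proof (glued_Ncond (HQ j Qj)). pose proof (HQ j Qj). tauto. }
  assert (Hnpre : ~ ctl_pre e a).
  { intros Hp. apply Cj0, (HMa j0 Qj0), Hpre.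
    rewrite Klift_pre, Kimage_pcond. auto. }
  split; [exact Hnpre|]. intros Hp.
  apply (Hpost (inl (pcond a j1))); rewrite ?Klift_pre, ?Klift_post, ?Kimage_pcond.
  - apply (HMa j1 Qj1), Cj1.
  - tauto.
  - auto.
Qed.

Lemma Kev_untouched_boundary {M C e} : N_state M C -> (forall j, C j -> IN j \/ TN j) ->
  ~ subset IN C -> ~ seteq C TN -> Kev K N e -> concession M e -> ~ touchesP K N e.
Proof.
  intros [Hc HM] Hbd HnI HnT (e' & _ & _ & ->)%Kev_inv Hcon.
  destruct (not_all_ex_not _ _ HnI) as [i0 (Hi0 & Ci0)%imply_to_and].
  assert (Hi1 : exists i1, IN i1 /\ C i1).
  { apply NNPP. intros Hno. apply HnT, (creach_seteq_Ter Hc). left.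
    intros j Cj. destruct (Hbd j Cj); [exfalso; eauto | auto]. }
  assert (Ht0 : exists t0, TN t0 /\ ~ C t0).
  { apply NNPP. intros Hno. apply HnT, (creach_seteq_Ter Hc). right.
    intros j Tj. apply NNPP. eauto. }
  assert (Ht1 : exists t1, TN t1 /\ C t1).
  { apply NNPP. intros Hno. apply HnI. intros i Hi.
    apply (creach_seteq_Ini Hc); [left | exact Hi]. intros j Cj. destruct (Hbd j Cj); [auto | exfalso; eauto]. }
  destruct Hi1 as (i1 & Hi1 & Ci1), Ht0 as (t0 & Ht0 & Ct0), Ht1 as (t1 & Ht1 & Ct1).
  assert (Hidle : forall a, hpre K a \/ hpost K a -> ~ ctl_pre e' a /\ ~ ctl_post e' a).
  { intros a [Ha | Ha].
    - apply (Kev_ignores_split HM Hcon (Q := IN) (j0 := i0) (j1 := i1)); auto.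
      intros j Hj. left; auto.
    - apply (Kev_ignores_split HM Hcon (Q := TN) (j0 := t0) (j1 := t1)); auto.
      intros j Hj. right; auto. }
  intros (c & [Hs | Hs] & Hp);
    [apply Pi_setE in Hs | apply Pt_setE in Hs]; destruct Hs as (a & j & -> & Ha & _);
    rewrite Klift_pre, Klift_post, !Kimage_pcond in Hp; destruct (Hidle a); tauto.
Qed.

Definition N_finished (M : @marking CS S) : Prop :=
  (forall j, ~ IN j -> ~ TN j -> ~ M (inl (T2 j))) /\
  (forall a i, hpre K a -> IN i -> ~ M (inl (pcond a i))).

Lemma N_state_not_finished {M C} : N_state M C -> ~ seteq C TN -> ~ N_finished M.
Proof.
  intros [Hc HM] HnT [Hint HPi].
  apply HnT, (creach_seteq_Ter Hc). left. intros j Cj.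
  destruct (classic (IN j)) as [Hi | Hi].
  - destruct hpre_nonempty as [a Ha]. exfalso. apply (HPi a j Ha Hi).
    apply (CN_eq_Nimage_mem HM), Nimage_pcond. split; [|left]; auto.
  - apply NNPP. intros Ht. apply (Hint j Hi Ht).
    apply (CN_eq_Nimage_mem HM), Nimage_t2. auto.
Qed.

Variable sigma0 : S -> Prop.
Hypothesis Hdisj : KN_disjoint K N.
Hypothesis Hni : non_interfering K N sigma0.

Notation M0 := (init_mark K N sigma0).

Lemma N_state_Kev_untouched {M C e} : reach (EvKN K N) M0 M -> N_state M C -> ~ seteq C TN ->
  Kev K N e -> concession M e -> ~ touchesP K N e.
Proof.
  intros Hr HC HnT HKe Hcon.
  destruct (classic (subset IN C \/ exists j, C j /\ ~ IN j /\ ~ TN j)) as [Hact | Hbd].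
  - destruct (Hni M Hr) as (_ & Huntouched & _).
    exact (Huntouched (N_state_active HC Hact) e HKe Hcon).
  - apply (Kev_untouched_boundary HC); auto.
    intros j Cj. apply NNPP. intros Hj. apply Hbd. right. exists j. tauto.
Qed.

Lemma Kmarking_Nev_N_state {M e} : reach (EvKN K N) M0 M -> Kmarking K N M ->
  Nev K N e -> concession M e -> N_state M IN.
Proof.
  intros Hr (HKi & HKa & _) (e' & He' & ->)%Nev_inv [Hpre _].
  destruct (Ev_pre_nonempty He') as [i0 Hi0pre].
  assert (Hi0 : IN i0).
  { apply NNPP. intros Hi. apply (HKi (T2 i0)).
    - exists i0. split; [reflexivity|]. split; [exact Hi | exact (Ev_pre_not_Ter He' Hi0pre)].
    - apply Hpre. rewrite Nlift_pre. apply Nimage_t2.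
      split; [exact Hi0pre|]. split; [exact Hi | exact (Ev_pre_not_Ter He' Hi0pre)]. }
  assert (HPi : forall c, Pi_set K N c -> M (inl c)).
  { intros c (a & i & -> & Ha & Hi)%Pi_setE.
    apply (HKa a i0 i Ha Hi0 Hi), Hpre. rewrite Nlift_pre. apply Nimage_pcond.
    split; [exact Hi0pre | left; auto]. }
  pose proof (proj1 (Hni M Hr) HPi) as HnPt.
  split; [constructor|]. intros c. rewrite Nimage_Ini. split.
  - intros [HMc [Hc | [Hc | Hc]]]; [exact Hc | destruct (HnPt c Hc HMc) | destruct (HKi c Hc HMc)].
  - intros Hc. split; [exact (HPi c Hc) | left; exact Hc].
Qed.

Lemma N_finished_T_KN M : (forall c, M (inl c) <-> T_KN K N c) -> N_finished M.
Proof.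
  intros HM. split.
  - intros j _ _ H. apply HM in H. exact (Kimage_t2 H).
  - intros a i Ha Hi H. apply HM, Kimage_pcond in H as [HT _]. exact (hpre_not_Ter Ha HT).
Qed.

(** [Π_1] without its conditions on the first event and the initial marking. *)
Definition N_phase (M : @marking CS S) (pi : list event) : Prop :=
  pi <> [] /\ Forall (EvKN K N) pi /\ Forall (Nmarking K N) (marks M pi) /\
  Forall (fun e => Kev K N e -> ~ touchesP K N e) pi /\
  CN_eq K N (fire_seq M pi) (Pt_set K N) /\ (exists l e, pi = l ++ [e] /\ Nev K N e).

Lemma N_phase_last M e : Nmarking K N M -> Nmarking K N (fire M e) -> Nev K N e ->
  CN_eq K N (fire M e) (Pt_set K N) -> N_phase M [e].
Proof.
  intros HNm HNm' Hn HPt.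
  split; [discriminate|]. split; [constructor; [right; exact Hn | constructor]|].
  split; [constructor; [exact HNm | constructor; [exact HNm' | constructor]]|].
  split; [constructor; [intros Hk; destruct (Hdisj _ Hk Hn) | constructor]|].
  split; [exact HPt | exists [], e; auto].
Qed.

Lemma N_phase_cons M e l : Nmarking K N M -> EvKN K N e -> (Kev K N e -> ~ touchesP K N e) ->
  N_phase (fire M e) l -> N_phase M (e :: l).
Proof.
  intros HNm He Ht (_ & HE & HNms & Hts & HPt & (l' & e' & -> & Hn)).
  split; [discriminate|]. split; [constructor; auto|].
  split; [constructor; auto|]. split; [constructor; auto|].
  split; [exact HPt | exists (e :: l'), e'; auto].
Qed.

Lemma N_phase_exists pi : forall M C, reach (EvKN K N) M0 M -> N_state M C -> ~ seteq C TN ->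
  run (EvKN K N) M pi -> N_finished (fire_seq M pi) ->
  exists pa pb, pi = pa ++ pb /\ N_phase M pa.
Proof.
  induction pi as [|e pi IH]; intros M C Hr HC HnT Hrun Hfin.
  { destruct (N_state_not_finished HC HnT Hfin). }
  destruct Hrun as (Hev & Hcon & Hrun).
  assert (Hr' : reach (EvKN K N) M0 (fire M e)) by (apply reach_step; auto).
  pose proof (N_state_Nmarking HC) as HNm.
  destruct Hev as [Hk | Hn].
  - pose proof (N_state_Kev_untouched Hr HC HnT Hk Hcon) as Ht.
    destruct (IH _ C Hr' (N_state_fire_Kev HC Hk Ht) HnT Hrun Hfin) as (pa & pb & -> & Hph).
    exists (e :: pa), pb. split; [reflexivity|].
    apply N_phase_cons; auto. left; exact Hk.
  - pose proof Hn as (e' & He' & ->)%Nev_inv.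
    pose proof (N_state_fire_Nev HC He' Hcon) as HC'.
    destruct (classic (seteq (cafter C e') TN)) as [HT | HnT'].
    + exists [Nlift e'], pi. split; [reflexivity|].
      apply N_phase_last; auto.
      * exact (N_state_Nmarking HC').
      * exact (CN_eq_Nimage_seteq (proj2 HC') HT Nimage_Ter).
    + destruct (IH _ _ Hr' HC' HnT' Hrun Hfin) as (pa & pb & -> & Hph).
      exists (Nlift e' :: pa), pb. split; [reflexivity|].
      apply N_phase_cons; auto.
      * right; exact Hn.
      * intros Hk. destruct (Hdisj _ Hk Hn).
Qed.

Lemma Pi0_nil {M} : Kmarking K N M -> Pi0 K N M [].
Proof. intros HKm. split; constructor; [exact HKm | constructor]. Qed.

Lemma Pi0_cons {M e l} : Kmarking K N M -> Kev K N e -> Pi0 K N (fire M e) l -> Pi0 K N M (e :: l).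
Proof. intros HKm Hk [HKs HKms]. split; constructor; assumption. Qed.

Lemma Pi1_N_phase {M e l} : N_state M IN -> Nev K N e -> N_phase M (e :: l) -> Pi1 K N M (e :: l).
Proof.
  intros [_ HM] Hn (Hne & HE & HNm & Ht & HPt & Hlast).
  repeat (split; [assumption|]). split.
  - exact (CN_eq_Nimage_seteq HM (fun c => iff_refl _) Nimage_Ini).
  - split; [exact HPt|]. split; [exists e, l; auto | exact Hlast].
Qed.

Notation complete_shape :=
  (form_cat (Pi0 K N) (form_star (form_cat (Pi1 K N) (Pi0 K N)))).

Lemma decompose_from_Kmarking n : forall pi M, length pi <= n ->
  reach (EvKN K N) M0 M -> Kmarking K N M -> run (EvKN K N) M pi ->
  N_finished (fire_seq M pi) -> complete_shape M pi.
Proof.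
  induction n as [|n IH]; intros [|e pi] M Hlen Hr HKm Hrun Hfin;
    try solve [exists [], []; split; [reflexivity | split; [apply Pi0_nil, HKm | constructor]]];
    simpl in Hlen; [lia|].
  pose proof Hrun as (Hev & Hcon & Hrun').
  destruct Hev as [Hk | Hn].
  - apply form_cat_cons; [intros l; apply Pi0_cons; assumption|].
    apply IH; [lia | | exact (Kmarking_fire_Kev HKm Hk) | assumption ..].
    apply reach_step; [assumption | left; exact Hk | assumption].
  - pose proof (Kmarking_Nev_N_state Hr HKm Hn Hcon) as HI.
    assert (HnT : ~ seteq IN TN).
    { intros Hs. destruct Ini_nonempty as [i Hi]. exact (Ini_Ter_disjoint Hi (proj1 (Hs i) Hi)). }
    destruct (N_phase_exists _ _ _ Hr HI HnT Hrun Hfin) as (pa & pb & Hsplit & Hph).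
    rewrite Hsplit, run_appE in Hrun. destruct Hrun as [Hrun_a Hrun_b].
    rewrite Hsplit, fire_seq_app in Hfin.
    destruct pa as [|e' l]; [destruct Hph as [[] _]; reflexivity|].
    injection Hsplit as <- ->.
    exists [], (e :: l ++ pb). split; [reflexivity|]. split; [exact (Pi0_nil HKm)|].
    change (e :: l ++ pb) with ((e :: l) ++ pb). apply form_star_cat.
    + exact (Pi1_N_phase HI Hn Hph).
    + destruct Hph as (_ & _ & _ & _ & HPt & _).
      apply IH; [| exact (reach_run Hr Hrun_a) | exact (CN_eq_Pt_Kmarking HPt) | assumption ..].
      rewrite length_app in Hlen. lia.
Qed.

End Substitution.

Theorem lemmaA8 (CS : CondStruct) (S : Type) (K : @ctx CS S) (N : @net CS S)
  (sigma0 : S -> Prop)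
  (HK : wf_ctx K) (HN : wf_net N) (Hdisj : KN_disjoint K N)
  (Hni : non_interfering K N sigma0)
  (pi : list event)
  (Hrun : run (EvKN K N) (init_mark K N sigma0) pi)
  (Hcomplete : forall c, fire_seq (init_mark K N sigma0) pi (inl c) <-> T_KN K N c) :
  form_cat (Pi0 K N) (form_star (form_cat (Pi1 K N) (Pi0 K N)))
    (init_mark K N sigma0) pi.
Proof.
  apply decompose_from_Kmarking with (n := length pi) (sigma0 := sigma0); auto.
  - constructor.
  - apply Kmarking_Kimage with (X := Ini (knet K)); auto. reflexivity.
  - apply N_finished_T_KN; auto.
Qed.
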